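(* Let $(W,S)$ be a Coxeter system, $w\in W\setminus\{1\}$, and $k\in I$ with $k\notin D_R(w)$. Let $W_{I\setminus\{k\}}=\langle s_i : i\in I\setminus\{k\}\rangle$. Then $$\mathrm{Annex}(ws_k)\subseteq \mathrm{Annex}(w)\cdot W_{I\setminus\{k\}}=\{xy: x\in\mathrm{Annex}(w),\ y\in W_{I\setminus\{k\}}\}.$$
   Context: $(W,S)$ a Coxeter system with $S=\{s_i:i\in I\}$; $\ell$ the length; $\le$ the Bruhat order. The right descent set is $D_R(w)=\{i\in I:\ell(ws_i)<\ell(w)\}$. $\mathrm{Annex}(w)=\{y\in W: w\not\le y\}$. *)

From Stdlib Require Import List Relations.
Import ListNotations.

Record Group := {
  gcar :> Type;
  gmul : gcar -> gcar -> gcar;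
  gone : gcar;
  ginv : gcar -> gcar;
  gmulA : forall x y z, gmul x (gmul y z) = gmul (gmul x y) z;
  gmul1 : forall x, gmul gone x = x;
  gmulV : forall x, gmul (ginv x) x = gone
}.

Arguments gmul {g}.
Arguments gone {g}.
Arguments ginv {g}.

Fixpoint gpow (G : Group) (x : G) (n : nat) : G :=
  match n with O => gone | S n => gmul x (gpow G x n) end.

Fixpoint eval_word {I : Type} (G : Group) (s : I -> G) (l : list (bool * I)) : G :=
  match l with
  | [] => gone
  | (b, i) :: l' => gmul (if b then ginv (s i) else s i) (eval_word G s l')
  end.

Definition in_gen_subgroup {I : Type} (G : Group) (s : I -> G) (J : I -> Prop) (y : G) : Prop :=
  exists l : list (bool * I), Forall (fun p => J (snd p)) l /\ eval_word G s l = y.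

(* Coxeter matrix, with m i j = 0 encoding m_ij = infinity. *)
Definition coxeter_matrix {I : Type} (m : I -> I -> nat) : Prop :=
  (forall i, m i i = 1) /\ (forall i j, m i j = m j i) /\
  (forall i j, i <> j -> m i j <> 1).

Definition satisfies_relations {I : Type} (G : Group) (f : I -> G) (m : I -> I -> nat) : Prop :=
  forall i j, m i j <> 0 -> gpow G (gmul (f i) (f j)) (m i j) = gone.

Definition coxeter_system {I : Type} (W : Group) (s : I -> W) : Prop :=
  exists m : I -> I -> nat,
    coxeter_matrix m /\
    satisfies_relations W s m /\
    (forall w : W, in_gen_subgroup W s (fun _ => True) w) /\
    (forall (G : Group) (f : I -> G), satisfies_relations G f m ->
       exists phi : W -> G,
         (forall x y, phi (gmul x y) = gmul (phi x) (phi y)) /\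
         (forall i, phi (s i) = f i)).

Fixpoint prod_word {I : Type} (G : Group) (s : I -> G) (l : list I) : G :=
  match l with [] => gone | i :: l' => gmul (s i) (prod_word G s l') end.

Definition has_word_of_length {I : Type} (W : Group) (s : I -> W) (w : W) (n : nat) : Prop :=
  exists l : list I, length l = n /\ prod_word W s l = w.

Definition len_lt {I : Type} (W : Group) (s : I -> W) (x y : W) : Prop :=
  exists n, has_word_of_length W s x n /\
    forall n', has_word_of_length W s y n' -> n < n'.

Definition in_right_descent {I : Type} (W : Group) (s : I -> W) (w : W) (k : I) : Prop :=
  len_lt W s (gmul w (s k)) w.

Definition reflection {I : Type} (W : Group) (s : I -> W) (t : W) : Prop :=
  exists (x : W) (i : I), t = gmul x (gmul (s i) (ginv x)).

Definition bruhat_step {I : Type} (W : Group) (s : I -> W) (u v : W) : Prop :=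
  exists t, reflection W s t /\ v = gmul u t /\ len_lt W s u v.

Definition bruhat_le {I : Type} (W : Group) (s : I -> W) : W -> W -> Prop :=
  clos_refl_trans W (bruhat_step W s).

Definition Annex {I : Type} (W : Group) (s : I -> W) (w : W) : W -> Prop :=
  fun y => ~ bruhat_le W s w y.

(* Tits' argument: the assignment s_i |-> (s_i, {s_i}) respects the Coxeter
   relations in the semidirect product of W with the power set of W (W acting by
   conjugation, sets added by symmetric difference), which yields a cocycle
   N(x, t) in {0, 1} with N(x, t) = 1 exactly when the reflection t shortens x on
   the right.  This is all that is needed for the Z-property of the Bruhat order
   (w <= x implies ws <= x or ws <= xs) and hence for lifting: w <= x and xs < x
   imply ws <= x.

   Given z with ws_k not <= z, consider the x <= z with x^-1 z in W_{I\{k}} and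
   descend along their lengths.  If w <= x, then x <> 1 has a right descent s_i:
   i = k is impossible since lifting would give ws_k <= x <= z, and for i <> k
   the shorter element x s_i is again of this kind.  So the descent stops at
   some x with w not <= x, and z = x (x^-1 z). *)
From Stdlib Require Import List Relations Lia Arith Bool Classical ClassicalEpsilon
  FunctionalExtensionality.
Import ListNotations.

Section GroupFacts.
Variable G : Group.

Lemma gmulV_r (x : G) : gmul x (ginv x) = gone.
Proof.
  rewrite <- (gmul1 G (gmul x (ginv x))), <- (gmulV G (ginv x)) at 1.
  rewrite <- gmulA, (gmulA G (ginv x) x), gmulV, gmul1. apply gmulV.
Qed.

Lemma gmul1_r (x : G) : gmul x gone = x.
Proof. rewrite <- (gmulV G x), gmulA, gmulV_r, gmul1. reflexivity. Qed.

Lemma ginv_unique (x y : G) : gmul x y = gone -> ginv x = y.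
Proof. intro H. rewrite <- (gmul1_r (ginv x)), <- H, gmulA, gmulV, gmul1. reflexivity. Qed.

Lemma ginv_involutive (x : G) : ginv (ginv x) = x.
Proof. apply ginv_unique, gmulV. Qed.

Lemma ginv_gmul (x y : G) : ginv (gmul x y) = gmul (ginv y) (ginv x).
Proof. apply ginv_unique. rewrite <- gmulA, (gmulA G y), gmulV_r, gmul1. apply gmulV_r. Qed.

Lemma ginv_one : ginv (@gone G) = gone.
Proof. apply ginv_unique, gmul1. Qed.

Lemma gmul_cancel_l (a x y : G) : gmul a x = gmul a y -> x = y.
Proof.
  intro H. rewrite <- (gmul1 G x), <- (gmul1 G y), <- (gmulV G a), <- !gmulA, H.
  reflexivity.
Qed.

Definition gconj (h y : G) : G := gmul h (gmul y (ginv h)).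

Lemma gconj_mul (a b y : G) : gconj (gmul a b) y = gconj a (gconj b y).
Proof. unfold gconj. rewrite ginv_gmul, !gmulA. reflexivity. Qed.

Lemma gconj_one (y : G) : gconj gone y = y.
Proof. unfold gconj. rewrite ginv_one, gmul1, gmul1_r. reflexivity. Qed.

Lemma gconjK (h y : G) : gconj (ginv h) (gconj h y) = y.
Proof. rewrite <- gconj_mul, gmulV, gconj_one. reflexivity. Qed.

Lemma gconjVK (h y : G) : gconj h (gconj (ginv h) y) = y.
Proof. rewrite <- gconj_mul, gmulV_r, gconj_one. reflexivity. Qed.

Lemma gconj_eq (h y a : G) : gconj h y = a <-> y = gconj (ginv h) a.
Proof. split; [intros <-; symmetry; apply gconjK | intros ->; apply gconjVK]. Qed.

Lemma gpow_add (r : G) a b : gpow G r (a + b) = gmul (gpow G r a) (gpow G r b).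
Proof. induction a; simpl; [rewrite gmul1 | rewrite IHa, gmulA]; reflexivity. Qed.

Lemma gpow_comm (r : G) n : gmul r (gpow G r n) = gmul (gpow G r n) r.
Proof.
  change (gmul r (gpow G r n)) with (gpow G r (1 + n)).
  rewrite Nat.add_comm, gpow_add. simpl. rewrite gmul1_r. reflexivity.
Qed.

Lemma gpow_ginv (r : G) n : ginv (gpow G r n) = gpow G (ginv r) n.
Proof.
  induction n; simpl; [apply ginv_one|].
  rewrite ginv_gmul, IHn, <- gpow_comm. reflexivity.
Qed.

End GroupFacts.

Section Morphism.
Variables G H : Group.
Variable f : G -> H.
Hypothesis f_mul : forall x y, f (gmul x y) = gmul (f x) (f y).

Lemma gmorph_one : f gone = gone.
Proof. apply (gmul_cancel_l H (f gone)). rewrite <- f_mul, gmul1, gmul1_r. reflexivity. Qed.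

Lemma gmorph_inv x : f (ginv x) = ginv (f x).
Proof. symmetry. apply ginv_unique. rewrite <- f_mul, gmulV_r. apply gmorph_one. Qed.

End Morphism.

Definition eq_bool {T : Type} (x y : T) : bool :=
  if excluded_middle_informative (x = y) then true else false.

Lemma eq_bool_true {T : Type} (x y : T) : eq_bool x y = true <-> x = y.
Proof. unfold eq_bool. destruct (excluded_middle_informative (x = y)); split; congruence. Qed.

Lemma eq_bool_iff {T : Type} (x y a b : T) : (x = y <-> a = b) -> eq_bool x y = eq_bool a b.
Proof.
  unfold eq_bool. intro H.
  destruct (excluded_middle_informative (x = y)), (excluded_middle_informative (a = b)); tauto.
Qed.

Fixpoint xor_sum (f : nat -> bool) (n : nat) : bool :=
  match n with O => false | S n => xorb (xor_sum f n) (f n) end.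

Lemma xor_sum_ext f g n : (forall p, p < n -> f p = g p) -> xor_sum f n = xor_sum g n.
Proof. induction n; simpl; intros; auto. rewrite IHn, H; auto. Qed.

Lemma xor_sum_add f a b :
  xor_sum f (a + b) = xorb (xor_sum f a) (xor_sum (fun p => f (a + p)) b).
Proof.
  induction b; simpl.
  - rewrite Nat.add_0_r, xorb_false_r. reflexivity.
  - rewrite Nat.add_succ_r. simpl. rewrite IHb, xorb_assoc. reflexivity.
Qed.

Lemma xor_sum_pairs g n :
  xor_sum (fun q => xorb (g (2 * q)) (g (2 * q + 1))) n = xor_sum g (2 * n).
Proof.
  induction n; [reflexivity|].
  replace (2 * S n) with (S (S (2 * n))) by lia.
  change (xorb (xor_sum (fun q => xorb (g (2 * q)) (g (2 * q + 1))) n)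
            (xorb (g (2 * n)) (g (2 * n + 1)))
          = xorb (xorb (xor_sum g (2 * n)) (g (2 * n))) (g (S (2 * n)))).
  rewrite IHn. replace (2 * n + 1) with (S (2 * n)) by lia. rewrite xorb_assoc. reflexivity.
Qed.

Section TitsGroup.
Variable W : Group.

Definition tits_mul (p q : W * (W -> bool)) : W * (W -> bool) :=
  (gmul (fst p) (fst q), fun y => xorb (snd q y) (snd p (gconj W (fst q) y))).

Definition tits_inv (p : W * (W -> bool)) : W * (W -> bool) :=
  (ginv (fst p), fun y => snd p (gconj W (ginv (fst p)) y)).

Lemma tits_mulA x y z : tits_mul x (tits_mul y z) = tits_mul (tits_mul x y) z.
Proof.
  destruct x, y, z. unfold tits_mul; simpl. f_equal; [apply gmulA|].
  apply functional_extensionality; intro t. rewrite gconj_mul, xorb_assoc. reflexivity.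
Qed.

Lemma tits_mul1 x : tits_mul (gone, fun _ => false) x = x.
Proof.
  destruct x. unfold tits_mul; simpl. f_equal; [apply gmul1|].
  apply functional_extensionality; intro t. apply xorb_false_r.
Qed.

Lemma tits_mulV x : tits_mul (tits_inv x) x = (gone, fun _ => false).
Proof.
  destruct x. unfold tits_mul, tits_inv; simpl. f_equal; [apply gmulV|].
  apply functional_extensionality; intro t. rewrite gconjK. apply xorb_nilpotent.
Qed.

(* The semidirect product of W with its power set, sets being encoded by their
   indicator functions. *)
Definition tits_group : Group :=
  {| gcar := W * (W -> bool); gmul := tits_mul; gone := (gone, fun _ => false);
     ginv := tits_inv; gmulA := tits_mulA; gmul1 := tits_mul1; gmulV := tits_mulV |}.

Lemma gpow_tits (p : tits_group) n :
  gpow tits_group p n =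
  (gpow W (fst p) n, fun y => xor_sum (fun q => snd p (gconj W (gpow W (fst p) q) y)) n).
Proof. induction n; [reflexivity|]. simpl gpow. rewrite IHn. reflexivity. Qed.

End TitsGroup.

Section CoxeterGenerators.
Variable I : Type.
Variable W : Group.
Variable s : I -> W.
Hypothesis s_involutive : forall i, gmul (s i) (s i) = gone.

Lemma ginv_gen i : ginv (s i) = s i.
Proof. apply ginv_unique, s_involutive. Qed.

Definition tits_gen (i : I) : tits_group W := (s i, fun y => eq_bool y (s i)).

(* With r = s_i s_j and rho = s_j s_i, the set attached to (tits_gen i tits_gen j)^n
   is the sum mod 2 of the singletons {rho^p s_j} for p < 2n; when r^n = 1 the
   list rho^p s_j is n-periodic, so every reflection occurs an even number of
   times. *)
Lemma tits_gen_relation i j n :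
  gpow W (gmul (s i) (s j)) n = gone ->
  gpow (tits_group W) (gmul (tits_gen i) (tits_gen j)) n = gone.
Proof.
  intro Hr. set (r := gmul (s i) (s j)) in *. set (rho := gmul (s j) (s i)).
  assert (Hrho : ginv r = rho) by (unfold r, rho; rewrite ginv_gmul, !ginv_gen; auto).
  assert (Hrho' : ginv rho = r) by (rewrite <- Hrho; apply ginv_involutive).
  assert (Hswap : forall q, gmul (s j) (gpow W r q) = gmul (gpow W rho q) (s j)).
  { induction q; simpl; [rewrite gmul1, gmul1_r; auto|].
    rewrite gmulA. replace (gmul (s j) r) with (gmul rho (s j))
      by (unfold r, rho; rewrite <- !gmulA; auto).
    rewrite <- gmulA, IHq, gmulA. auto. }
  assert (Heven : forall q, gconj W (ginv (gpow W r q)) (s j) = gmul (gpow W rho (2 * q)) (s j)).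
  { intro q. unfold gconj. rewrite ginv_involutive, Hswap, gpow_ginv, Hrho, gmulA.
    f_equal. rewrite <- gpow_add. f_equal. lia. }
  assert (Hodd : forall q, gconj W (ginv (gmul (s j) (gpow W r q))) (s i) =
                           gmul (gpow W rho (2 * q + 1)) (s j)).
  { intro q. unfold gconj.
    rewrite ginv_involutive, Hswap, ginv_gmul, ginv_gen, gpow_ginv, Hrho', Hswap, !gmulA.
    f_equal. rewrite <- (gmulA _ _ (s j) (s i)). fold rho.
    rewrite <- gpow_comm. change (gmul rho (gpow W rho q)) with (gpow W rho (S q)).
    rewrite <- gpow_add. f_equal. lia. }
  simpl gmul. unfold tits_mul. rewrite gpow_tits. simpl. fold r. rewrite Hr. f_equal.
  apply functional_extensionality; intro y.
  set (g := fun p => eq_bool y (gmul (gpow W rho p) (s j))).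
  rewrite (xor_sum_ext _ (fun q => xorb (g (2 * q)) (g (2 * q + 1)))).
  - rewrite xor_sum_pairs. replace (2 * n) with (n + n) by lia. rewrite xor_sum_add.
    rewrite (xor_sum_ext (fun p => g (n + p)) g); [apply xorb_nilpotent|].
    intros p _. unfold g.
    rewrite gpow_add, <- Hrho, <- gpow_ginv, Hr, ginv_one, gmul1. reflexivity.
  - intros q _. unfold g. f_equal; apply eq_bool_iff.
    + rewrite <- Heven. apply gconj_eq.
    + rewrite <- Hodd, <- gconj_mul. apply gconj_eq.
Qed.

Section Bruhat.
Hypothesis s_generates : forall w, in_gen_subgroup W s (fun _ => True) w.
Variable N : W -> W -> bool.
Hypothesis N_mul : forall x y t, N (gmul x y) t = xorb (N y t) (N x (gconj W y t)).
Hypothesis N_gen : forall i t, N (s i) t = eq_bool t (s i).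

Lemma N_one t : N gone t = false.
Proof.
  pose proof (N_mul gone gone t) as H. rewrite gmul1, gconj_one in H.
  destruct (N gone t); simpl in H; congruence.
Qed.

Lemma prod_word_app l1 l2 :
  prod_word W s (l1 ++ l2) = gmul (prod_word W s l1) (prod_word W s l2).
Proof. induction l1; simpl; [rewrite gmul1 | rewrite IHl1, gmulA]; reflexivity. Qed.

Lemma N_exchange l t : N (prod_word W s l) t = true ->
  exists l', S (length l') = length l /\ prod_word W s l' = gmul (prod_word W s l) t.
Proof.
  induction l as [|i l IH]; simpl; intro H.
  - rewrite N_one in H; discriminate.
  - rewrite N_mul, N_gen in H. destruct (N (prod_word W s l) t) eqn:E.
    + destruct (IH eq_refl) as [l' [Hl Hp]]. exists (i :: l'). simpl.
      split; [lia|]. rewrite Hp, gmulA. reflexivity.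
    + rewrite xorb_false_l in H. apply (eq_bool_true (T := W)) in H.
      exists l. split; [reflexivity|].
      set (p := prod_word W s l) in *. unfold gconj in H.
      assert (Hpt : gmul p t = gmul (s i) p) by (rewrite <- H, <- !gmulA, gmulV, gmul1_r; auto).
      rewrite <- gmulA, Hpt, gmulA, s_involutive, gmul1. reflexivity.
Qed.

Lemma exists_reduced_word x : exists l, prod_word W s l = x /\
  forall n, has_word_of_length W s x n -> length l <= n.
Proof.
  assert (Hword : exists n, has_word_of_length W s x n).
  { destruct (s_generates x) as [l [_ <-]]. exists (length l), (map snd l).
    split; [apply length_map|].
    induction l as [|[[|] i] l IH]; simpl; rewrite ?IH, ?ginv_gen; auto. }
  destruct (dec_inh_nat_subset_has_unique_least_element _ (fun n => classic _) Hword)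
    as [n [[[l [Hl Hp]] Hmin] _]].
  exists l. split; [exact Hp|]. rewrite Hl. exact Hmin.
Qed.

Lemma len_lt_asym x y : len_lt W s x y -> ~ len_lt W s y x.
Proof. intros [n [Hn Hx]] [m [Hm Hy]]. specialize (Hx m Hm). specialize (Hy n Hn). lia. Qed.

Lemma N_true_len_lt x t : N x t = true -> len_lt W s (gmul x t) x.
Proof.
  intro H. destruct (exists_reduced_word x) as [l [<- Hmin]].
  destruct (N_exchange l t H) as [l' [Hl Hp]].
  exists (length l'). split; [exists l'; auto|].
  intros n' Hn'. specialize (Hmin n' Hn'). lia.
Qed.

Lemma reflection_involutive t : reflection W s t -> gmul t t = gone.
Proof.
  intros [x [i ->]].
  rewrite <- !gmulA, (gmulA _ (ginv x)), gmulV, gmul1, (gmulA _ (s i)), s_involutive, gmul1.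
  apply gmulV_r.
Qed.

Lemma reflection_gen i : reflection W s (s i).
Proof. exists gone, i. rewrite ginv_one, gmul1_r, gmul1. reflexivity. Qed.

Lemma reflection_gconj x t : reflection W s t -> reflection W s (gconj W x t).
Proof. intros [y [j ->]]. exists (gmul x y), j. symmetry. exact (gconj_mul W x y (s j)). Qed.

Lemma N_reflection_self t : reflection W s t -> N t t = true.
Proof.
  intros [x [i Ht]].
  assert (E : gconj W (ginv x) t = s i) by (rewrite Ht; apply gconjK).
  assert (Einv : N (ginv x) t = N x (s i)).
  { pose proof (N_mul x (ginv x) t) as H0. rewrite gmulV_r, N_one, E in H0.
    destruct (N (ginv x) t), (N x (s i)); simpl in *; congruence. }
  assert (Es : gconj W (s i) (s i) = s i)
    by (unfold gconj; rewrite ginv_gen, s_involutive, gmul1_r; auto).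
  rewrite Ht at 1. rewrite !N_mul, N_gen, Einv, gconj_mul, E, Es.
  rewrite (proj2 (eq_bool_true _ _) eq_refl). destruct (N x (s i)); reflexivity.
Qed.

Lemma N_false_len_lt x t : reflection W s t -> N x t = false -> len_lt W s x (gmul x t).
Proof.
  intros Ht H. pose proof (reflection_involutive t Ht) as Htt.
  assert (Hc : gconj W t t = t)
    by (unfold gconj; rewrite (ginv_unique W t t Htt), Htt, gmul1_r; auto).
  assert (H1 : N (gmul x t) t = true) by (rewrite N_mul, Hc, H, N_reflection_self; auto).
  pose proof (N_true_len_lt _ _ H1) as H2. rewrite <- gmulA, Htt, gmul1_r in H2. exact H2.
Qed.

Lemma bruhat_le_descent x i : len_lt W s (gmul x (s i)) x -> bruhat_le W s (gmul x (s i)) x.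
Proof.
  intro Hl. apply rt_step. exists (s i). split; [apply reflection_gen|].
  rewrite <- gmulA, s_involutive, gmul1_r. auto.
Qed.

Lemma bruhat_step_mul_gen u t i : reflection W s t -> t <> s i ->
  len_lt W s u (gmul u t) -> bruhat_step W s (gmul u (s i)) (gmul (gmul u t) (s i)).
Proof.
  intros Ht Hne Hl. set (t' := gconj W (s i) t).
  assert (Hu : N u t = false).
  { destruct (N u t) eqn:E; auto. exfalso. exact (len_lt_asym _ _ Hl (N_true_len_lt _ _ E)). }
  assert (Eq : gmul (gmul u (s i)) t' = gmul (gmul u t) (s i)).
  { unfold t', gconj. rewrite ginv_gen, <- !gmulA, (gmulA _ (s i) (s i)), s_involutive, gmul1.
    reflexivity. }
  assert (Ec : gconj W (s i) t' = t)
    by (unfold t'; rewrite <- gconj_mul, s_involutive, gconj_one; auto).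
  assert (Ht' : N (gmul u (s i)) t' = false).
  { rewrite N_mul, N_gen, Ec, Hu. destruct (eq_bool t' (s i)) eqn:E; auto.
    apply (eq_bool_true (T := W)) in E. exfalso. apply Hne.
    rewrite <- Ec, E. unfold gconj. rewrite ginv_gen, s_involutive, gmul1_r. reflexivity. }
  exists t'. split; [apply reflection_gconj; auto|]. split; [auto|].
  rewrite <- Eq. apply N_false_len_lt; [apply reflection_gconj; auto | exact Ht'].
Qed.

Lemma bruhat_le_Z_property w x i : bruhat_le W s w x ->
  bruhat_le W s (gmul w (s i)) x \/ bruhat_le W s (gmul w (s i)) (gmul x (s i)).
Proof.
  intro H. apply clos_rt_rtn1_iff in H.
  induction H as [|u x' [t [Ht [-> Hl]]] _ [IH|IH]].
  - right. apply rt_refl.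
  - left. eapply rt_trans; [exact IH|]. apply rt_step. exists t. auto.
  - destruct (classic (t = s i)) as [->|Hne]; [left; exact IH|].
    right. eapply rt_trans; [exact IH|]. apply rt_step. apply bruhat_step_mul_gen; auto.
Qed.

Lemma bruhat_le_lifting w x i : bruhat_le W s w x -> len_lt W s (gmul x (s i)) x ->
  bruhat_le W s (gmul w (s i)) x.
Proof.
  intros H Hl. destruct (bruhat_le_Z_property w x i H) as [H1|H1]; [exact H1|].
  eapply rt_trans; [exact H1|]. apply bruhat_le_descent, Hl.
Qed.

Lemma bruhat_le_one w : bruhat_le W s w gone -> w = gone.
Proof.
  intro H. apply clos_rt_rtn1_iff in H. inversion H as [|u y [t [_ [_ [n [_ Hn]]]]] _]; auto.
  exfalso. assert (n < 0) by (apply Hn; exists []; auto). lia.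
Qed.

Lemma exists_right_descent x : x <> gone -> exists i, len_lt W s (gmul x (s i)) x.
Proof.
  intro Hx. destruct (exists_reduced_word x) as [l [Hp Hmin]].
  destruct l as [|j l] using rev_ind; [contradiction Hx; auto|]. clear IHl.
  exists j. exists (length l). split.
  - exists l. split; [reflexivity|].
    rewrite <- Hp, prod_word_app, <- gmulA. simpl. rewrite gmul1_r, s_involutive, gmul1_r.
    reflexivity.
  - intros n Hn. specialize (Hmin n Hn). rewrite length_app in Hmin. simpl in Hmin. lia.
Qed.

Lemma annex_gen_mul_factor (w z : W) (k : I) : w <> gone ->
  Annex W s (gmul w (s k)) z ->
  forall n x, has_word_of_length W s x n -> bruhat_le W s x z ->
  in_gen_subgroup W s (fun i => i <> k) (gmul (ginv x) z) ->
  exists x' y, Annex W s w x' /\ in_gen_subgroup W s (fun i => i <> k) y /\ z = gmul x' y.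
Proof.
  intros Hw Hz n. induction n as [n IH] using lt_wf_ind. intros x Hxn Hxz Hy.
  destruct (classic (bruhat_le W s w x)) as [Hwx|Hwx].
  2:{ exists x, (gmul (ginv x) z). split; [exact Hwx|]. split; [exact Hy|].
      rewrite gmulA, gmulV_r, gmul1. reflexivity. }
  assert (Hx1 : x <> gone) by (intros ->; exact (Hw (bruhat_le_one w Hwx))).
  destruct (exists_right_descent x Hx1) as [i Hdesc].
  destruct (classic (i = k)) as [->|Hik].
  - contradiction Hz. eapply rt_trans; [apply bruhat_le_lifting; eauto | exact Hxz].
  - pose proof (bruhat_le_descent x i Hdesc) as Hle.
    destruct Hdesc as [m [Hm Hlt]]. apply (IH m (Hlt n Hxn) (gmul x (s i)) Hm).
    + eapply rt_trans; [exact Hle | exact Hxz].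
    + destruct Hy as [l [Hl He]]. exists ((false, i) :: l). split; [constructor; auto|].
      simpl. rewrite He, ginv_gmul, ginv_gen, gmulA. reflexivity.
Qed.

End Bruhat.

End CoxeterGenerators.

Lemma coxeter_gen_involutive (I : Type) (W : Group) (s : I -> W) :
  coxeter_system W s -> forall i, gmul (s i) (s i) = gone.
Proof.
  intros [m [[Hm1 _] [Hrel _]]] i. specialize (Hrel i i). rewrite Hm1 in Hrel.
  simpl in Hrel. rewrite gmul1_r in Hrel. apply Hrel. lia.
Qed.

Lemma exists_reflection_cocycle (I : Type) (W : Group) (s : I -> W) :
  coxeter_system W s ->
  exists N : W -> W -> bool,
    (forall x y t, N (gmul x y) t = xorb (N y t) (N x (gconj W y t))) /\
    (forall i t, N (s i) t = eq_bool t (s i)).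
Proof.
  intro HW. pose proof (coxeter_gen_involutive I W s HW) as Hss.
  destruct HW as [m [_ [Hrel [Hgen Huniv]]]].
  destruct (Huniv (tits_group W) (tits_gen I W s)) as [phi [Hphi Hphis]].
  { intros i j Hij. apply tits_gen_relation; auto. }
  assert (Hfst : forall x, fst (phi x) = x).
  { intro x. destruct (Hgen x) as [l [_ <-]].
    induction l as [|[b i] l IH]; simpl.
    - rewrite (gmorph_one _ _ phi Hphi). reflexivity.
    - rewrite Hphi. simpl. rewrite IH. f_equal. destruct b.
      + rewrite (gmorph_inv _ _ phi Hphi), Hphis. reflexivity.
      + rewrite Hphis. reflexivity. }
  exists (fun x => snd (phi x)). split.
  - intros x y t. rewrite Hphi. simpl. rewrite Hfst. reflexivity.
  - intros i t. rewrite Hphis. reflexivity.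
Qed.

Theorem proposition3p13 (I : Type) (W : Group) (s : I -> W)
  (HW : coxeter_system W s) (w : W) (k : I)
  (Hw1 : w <> gone) (Hk : ~ in_right_descent W s w k) :
  forall z : W, Annex W s (gmul w (s k)) z ->
    exists x y : W, Annex W s w x /\ in_gen_subgroup W s (fun i => i <> k) y /\
      z = gmul x y.
Proof.
  intros z Hz.
  pose proof (coxeter_gen_involutive I W s HW) as Hss.
  assert (Hgen : forall x, in_gen_subgroup W s (fun _ => True) x)
    by (destruct HW as [m [_ [_ [Hg _]]]]; exact Hg).
  destruct (exists_reflection_cocycle I W s HW) as [N [HN_mul HN_gen]].
  destruct (exists_reduced_word I W s Hss Hgen z) as [l [Hl _]].
  apply (annex_gen_mul_factor I W s Hss Hgen N HN_mul HN_gen w z k Hw1 Hz (length l) z).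
  - exists l. auto.
  - apply rt_refl.
  - exists []. split; [constructor|]. symmetry. apply gmulV.
Qed.
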